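(* Let $W:\mathbb{R}\to\mathbb{R}$ be a bounded, monotone (nondecreasing) solution of $W=\mathcal{A}\Phi'(\mathcal{A}W)$ with $W(\varphi)\to\pm1$ as $\varphi\to\pm\infty$, and set $\widetilde W=W_{\rm sh}-W$. Then for all $\underline\tau,\overline\tau$ with $\underline\tau<\tau_+<\overline\tau$ there exist positive constants $\underline c,\overline c$ such that $$\underline c\,e^{-\overline\tau\varphi}\le\widetilde W(\varphi)\le\overline c\,e^{-\underline\tau\varphi}\qquad\text{for all }\varphi\ge0.$$
   Context: $\Phi:\mathbb{R}\to\mathbb{R}$ is twice continuously differentiable on $[-1,1]$ with $\Phi'(-1)=-1$, $\Phi'(1)=1$, $\Phi''\ge0$ on $[-1,1]$, $\Phi(-1)=\Phi(1)$, $\Phi''(-1)<1$, and $\lambda_+:=\Phi''(1)\in(0,1)$. $(\mathcal{A}U)(\varphi)=\int_{\varphi-1/2}^{\varphi+1/2}U(s)\,ds$; $W_{\rm sh}(\varphi)=\mathrm{sgn}(\varphi)$. $\tau_+>0$ denotes the unique positive real solution of $\tau^2=2\lambda_+(\cosh\tau-1)$. *)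

From Stdlib Require Import Reals Lra.
From Coquelicot Require Import Coquelicot.
Open Scope R_scope.

Definition I11 (x : R) : Prop := -1 <= x <= 1.

Definition has_deriv_on_I11 (g : R -> R) (x l : R) : Prop :=
  filterlim (fun h => (g (x + h) - g x) / h)
    (within (fun h => h <> 0 /\ I11 (x + h)) (locally 0)) (locally l).

Definition cont_on_I11 (g : R -> R) (x : R) : Prop :=
  filterlim g (within I11 (locally x)) (locally (g x)).

Definition opA (U : R -> R) (phi : R) : R := RInt U (phi - 1/2) (phi + 1/2).

(* W_sh = sgn, with the convention sgn(0) = 1 *)
Definition Wsh (phi : R) : R := if Rlt_dec phi 0 then -1 else 1.

From Stdlib Require Import Reals Lra Lia ZArith Classical_Prop.
From Coquelicot Require Import Coquelicot.
Open Scope R_scope.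

(* Put V = 1 - W (which is W_sh - W for phi >= 0) and G = 1 - Phi'(A W).  The
   profile equation reads V = A G, and since Phi'(1) = 1 and Phi''(1) = lambda_+,
   G is close to lambda_+ A V wherever A V is small, i.e. near +oo; moreover V > 0,
   because a zero of V would propagate to -oo.  On exponentials A acts diagonally,
   A e^{-t.} = a(t) e^{-t.} with a(t) = sinh(t/2) / (t/2), and tau_+ is exactly the
   rate with lambda_+ a(tau_+)^2 = 1.  For t < tau_+ pick mu in (lambda_+, 1) with
   mu a(t)^2 <= 1: far out V <= mu A(A V), so a bound V <= C e^{-t phi} + B mu^k
   improves to the same bound with mu^(k+1).  Symmetrically, for t > tau_+ pick
   nu < lambda_+ with nu a(t)^2 >= 1 and iterate c e^{-t phi} - c nu^k <= V. *)

Lemma ex_RInt_Z_valued_nondecreasing (N : nat) :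
  forall (k : R -> Z) a b, a <= b ->
  (forall x y, a <= x -> x <= y -> y <= b -> (k x <= k y)%Z) ->
  (k b - k a <= Z.of_nat N)%Z -> ex_RInt (fun x => IZR (k x)) a b.
Proof.
induction N as [|N IH]; intros k a b Hab Hk HN.
- apply ex_RInt_ext with (fun _ => IZR (k a)); [|apply ex_RInt_const].
  intros x Hx. rewrite Rmin_left, Rmax_right in Hx by lra.
  pose proof (Hk a x ltac:(lra) ltac:(lra) ltac:(lra)).
  pose proof (Hk x b ltac:(lra) ltac:(lra) ltac:(lra)).
  f_equal; lia.
- (* c is the point where k first jumps *)
  set (E := fun x => a <= x <= b /\ k x = k a).
  destruct (completeness E) as [c [Hc_ub Hc_lub]].
  { exists b; intros x [Hx _]; lra. }
  { exists a; split; [lra|reflexivity]. }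
  assert (Hac : a <= c) by (apply Hc_ub; split; [lra|reflexivity]).
  assert (Hcb : c <= b) by (apply Hc_lub; intros x [Hx _]; lra).
  assert (Hbefore : forall x, a <= x < c -> k x = k a).
  { intros x Hx.
    destruct (classic (exists y, E y /\ x < y)) as [[y [[Hy Hky] Hxy]]|Hno].
    - pose proof (Hk a x ltac:(lra) ltac:(lra) ltac:(lra)).
      pose proof (Hk x y ltac:(lra) ltac:(lra) ltac:(lra)). lia.
    - exfalso. enough (c <= x) by lra.
      apply Hc_lub. intros y Hy. apply Rnot_lt_le. intros Hxy. apply Hno. eauto. }
  assert (Hafter : forall x, c < x <= b -> (k a + 1 <= k x)%Z).
  { intros x Hx. pose proof (Hk a x ltac:(lra) ltac:(lra) ltac:(lra)).
    destruct (Z.eq_dec (k x) (k a)) as [e|ne]; [|lia].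
    enough (x <= c) by lra. apply Hc_ub. split; [lra|exact e]. }
  apply ex_RInt_Chasles with c.
  + apply ex_RInt_ext with (fun _ => IZR (k a)); [|apply ex_RInt_const].
    intros x Hx. rewrite Rmin_left, Rmax_right in Hx by lra.
    rewrite (Hbefore x); [reflexivity|lra].
  + destruct (Req_dec c b) as [->|Hcb']; [apply ex_RInt_point|].
    set (k' := fun x => if Rle_dec x c then (k a + 1)%Z else k x).
    apply ex_RInt_ext with (fun x => IZR (k' x)).
    * intros x Hx. rewrite Rmin_left, Rmax_right in Hx by lra.
      unfold k'. destruct (Rle_dec x c); [lra|reflexivity].
    * apply IH; [lra| |]; unfold k'.
      -- intros x y Hx Hxy Hy.
         destruct (Rle_dec x c), (Rle_dec y c); [lia|apply Hafter; lra|lra|apply Hk; lra].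
      -- destruct (Rle_dec b c); [lra|]. destruct (Rle_dec c c); [lia|lra].
Qed.

Lemma up_le x y : x <= y -> (up x <= up y)%Z.
Proof.
intros Hxy. destruct (archimed x) as [Hx1 Hx2], (archimed y) as [Hy1 Hy2].
assert (IZR (up x - 1) < IZR (up y)) by (rewrite minus_IZR; lra).
apply lt_IZR in H. lia.
Qed.

Lemma ex_RInt_nondecreasing (f : R -> R) a b : a <= b ->
  (forall x y, a <= x -> x <= y -> y <= b -> f x <= f y) -> ex_RInt f a b.
Proof.
intros Hab Hf.
(* f is the uniform limit of the nondecreasing step functions up(n f)/n *)
set (fn := fun (n : nat) x => / INR (S n) * IZR (up (INR (S n) * f x))).
assert (Hfn : forall n, ex_RInt (fn n) a b).
{ intros n. apply (ex_RInt_scal (fun x => IZR (up (INR (S n) * f x)))).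
  assert (Hup : forall x y, a <= x -> x <= y -> y <= b ->
            (up (INR (S n) * f x) <= up (INR (S n) * f y))%Z).
  { intros x y Hx Hxy Hy. apply up_le, Rmult_le_compat_l; [apply pos_INR|auto]. }
  apply ex_RInt_Z_valued_nondecreasing
    with (Z.to_nat (up (INR (S n) * f b) - up (INR (S n) * f a))); [exact Hab|exact Hup|].
  rewrite Z2Nat.id; [lia|]. pose proof (Hup a b ltac:(lra) Hab ltac:(lra)). lia. }
assert (Hclose : forall n x, Rabs (fn n x - f x) <= / INR (S n)).
{ intros n x. assert (Hn : 0 < INR (S n)) by (apply lt_0_INR; lia).
  destruct (archimed (INR (S n) * f x)) as [H1 H2].
  replace (fn n x - f x) with ((IZR (up (INR (S n) * f x)) - INR (S n) * f x) / INR (S n))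
    by (unfold fn; field; lra).
  rewrite Rabs_right by (apply Rle_ge, Rdiv_le_0_compat; lra).
  unfold Rdiv. rewrite <- (Rmult_1_l (/ INR (S n))) at 2.
  apply Rmult_le_compat_r; [left; apply Rinv_0_lt_compat|]; lra. }
destruct (filterlim_RInt fn a b eventually _ f (fun n => RInt (fn n) a b))
  as [If [_ HIf]]; [intros n; apply RInt_correct, Hfn| |exists If; exact HIf].
intros P [eps HP].
destruct (INR_unbounded (/ eps)) as [N HN].
exists N. intros n Hn. apply HP. intros t.
apply Rle_lt_trans with (1 := Hclose n t).
assert (0 < / eps) by (apply Rinv_0_lt_compat, cond_pos).
assert (/ eps < INR (S n)) by (apply Rlt_le_trans with (1 := HN), le_INR; lia).
rewrite <- (Rinv_inv eps). apply Rinv_lt_contravar; [apply Rmult_lt_0_compat|]; lra.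
Qed.

Lemma has_deriv_on_I11_eps f x l : has_deriv_on_I11 f x l ->
  forall eps, 0 < eps -> exists d, 0 < d /\
  forall h, h <> 0 -> Rabs h < d -> I11 (x + h) ->
    Rabs ((f (x + h) - f x) / h - l) < eps.
Proof.
intros H eps Heps.
destruct (H _ (locally_ball l (mkposreal eps Heps))) as [d Hd].
exists d. split; [apply cond_pos|]. intros h Hh0 Hhd HI.
apply (Hd h); [|split; auto].
change (Rabs (h - 0) < d). rewrite Rminus_0_r. exact Hhd.
Qed.

Lemma has_deriv_on_I11_interior f x l : -1 < x < 1 ->
  has_deriv_on_I11 f x l -> derivable_pt_lim f x l.
Proof.
intros Hx H eps Heps.
destruct (has_deriv_on_I11_eps f x l H eps Heps) as [d [Hd Hd']].
assert (Hm : 0 < Rmin d (Rmin (1 - x) (x + 1))) by (repeat apply Rmin_pos; lra).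
exists (mkposreal _ Hm). intros h Hh0 Hh. simpl in Hh.
pose proof (Rmin_l d (Rmin (1 - x) (x + 1))).
pose proof (Rmin_r d (Rmin (1 - x) (x + 1))).
pose proof (Rmin_l (1 - x) (x + 1)). pose proof (Rmin_r (1 - x) (x + 1)).
apply Hd'; [auto|lra|].
destruct (Rabs_def2 h (Rmin d (Rmin (1 - x) (x + 1)))); [lra|unfold I11; lra].
Qed.

Lemma has_deriv_on_I11_lipschitz f x l : has_deriv_on_I11 f x l ->
  exists d, 0 < d /\ forall y, Rabs (y - x) < d -> I11 y ->
    Rabs (f y - f x) <= (Rabs l + 1) * Rabs (y - x).
Proof.
intros H.
destruct (has_deriv_on_I11_eps f x l H 1 Rlt_0_1) as [d [Hd Hd']].
exists d. split; [exact Hd|]. intros y Hyd HI.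
destruct (Req_dec y x) as [->|Hne]; [rewrite !Rminus_eq_0, Rabs_R0; lra|].
specialize (Hd' (y - x) ltac:(lra) Hyd ltac:(replace (x + (y - x)) with y by ring; exact HI)).
replace (x + (y - x)) with y in Hd' by ring.
replace (f y - f x) with ((f y - f x) / (y - x) * (y - x)) by (field; lra).
rewrite Rabs_mult. apply Rmult_le_compat_r; [apply Rabs_pos|].
replace ((f y - f x) / (y - x)) with (((f y - f x) / (y - x) - l) + l) by ring.
pose proof (Rabs_triang ((f y - f x) / (y - x) - l) l). lra.
Qed.

Lemma nondecreasing_on_I11 f df :
  (forall x, I11 x -> has_deriv_on_I11 f x (df x)) -> (forall x, I11 x -> 0 <= df x) ->
  forall x y, -1 <= x -> x <= y -> y <= 1 -> f x <= f y.
Proof.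
intros Hd Hpos.
assert (Hint : forall x y, -1 < x -> x < y -> y < 1 -> f x <= f y).
{ intros x y Hx Hxy Hy.
  destruct (MVT_cor2 f df x y Hxy) as [c [Hc Hcxy]].
  - intros c Hc. apply has_deriv_on_I11_interior; [lra|]. apply Hd. red; lra.
  - pose proof (Hpos c ltac:(red; lra)). nra. }
intros x y Hx Hxy Hy.
destruct (Req_dec x y) as [->|Hne]; [lra|].
(* push the endpoints inwards by t and use the Lipschitz bounds at x and y *)
destruct (has_deriv_on_I11_lipschitz f x (df x) (Hd x ltac:(red; lra))) as [dx [Hdx Lx]].
destruct (has_deriv_on_I11_lipschitz f y (df y) (Hd y ltac:(red; lra))) as [dy [Hdy Ly]].
set (K := Rabs (df x) + Rabs (df y) + 1).
assert (HK : 0 < K) by (unfold K; pose proof (Rabs_pos (df x)); pose proof (Rabs_pos (df y)); lra).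
apply Rnot_lt_le. intros Hlt.
set (t := Rmin (Rmin dx dy) (Rmin ((y - x) / 3) ((f x - f y) / (2 * K))) / 2).
assert (Ht : 0 < t /\ t < dx /\ t < dy /\ t < (y - x) / 3 /\ t < (f x - f y) / (2 * K)).
{ assert (0 < (f x - f y) / (2 * K)) by (apply Rdiv_lt_0_compat; lra).
  pose proof (Rmin_l dx dy). pose proof (Rmin_r dx dy).
  pose proof (Rmin_l ((y - x) / 3) ((f x - f y) / (2 * K))).
  pose proof (Rmin_r ((y - x) / 3) ((f x - f y) / (2 * K))).
  pose proof (Rmin_l (Rmin dx dy) (Rmin ((y - x) / 3) ((f x - f y) / (2 * K)))).
  pose proof (Rmin_r (Rmin dx dy) (Rmin ((y - x) / 3) ((f x - f y) / (2 * K)))).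
  assert (0 < Rmin (Rmin dx dy) (Rmin ((y - x) / 3) ((f x - f y) / (2 * K))))
    by (repeat apply Rmin_pos; lra).
  unfold t; lra. }
destruct Ht as (Ht0 & Htx & Hty & Htxy & Htf).
assert (Hx' := Lx (x + t) ltac:(replace (x + t - x) with t by ring; rewrite Rabs_right; lra)
  ltac:(red; lra)).
assert (Hy' := Ly (y - t) ltac:(replace (y - t - y) with (- t) by ring;
  rewrite Rabs_Ropp, Rabs_right; lra) ltac:(red; lra)).
replace (x + t - x) with t in Hx' by ring. replace (y - t - y) with (- t) in Hy' by ring.
rewrite Rabs_Ropp, (Rabs_right t) in Hy' by lra. rewrite (Rabs_right t) in Hx' by lra.
apply Rabs_le_between in Hx'. apply Rabs_le_between in Hy'.
pose proof (Hint (x + t) (y - t) ltac:(lra) ltac:(lra) ltac:(lra)).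
assert (2 * K * t < f x - f y).
{ apply (Rmult_lt_compat_l (2 * K)) in Htf; [|lra].
  replace (2 * K * ((f x - f y) / (2 * K))) with (f x - f y) in Htf by (field; lra).
  exact Htf. }
assert ((Rabs (df x) + 1) * t + (Rabs (df y) + 1) * t <= 2 * K * t).
{ unfold K. pose proof (Rabs_pos (df x)). pose proof (Rabs_pos (df y)). nra. }
lra.
Qed.

Lemma has_deriv_on_I11_left_of_1 f l : has_deriv_on_I11 f 1 l ->
  forall e, 0 < e -> exists d, 0 < d /\ forall y, 1 - d < y <= 1 ->
    (l - e) * (1 - y) <= f 1 - f y <= (l + e) * (1 - y).
Proof.
intros H e He.
destruct (has_deriv_on_I11_eps f 1 l H e He) as [d [Hd Hd']].
exists (Rmin d 2). split; [apply Rmin_pos; lra|]. intros y Hy.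
pose proof (Rmin_l d 2). pose proof (Rmin_r d 2).
destruct (Req_dec y 1) as [->|Hne]; [rewrite !Rminus_eq_0; lra|].
specialize (Hd' (y - 1) ltac:(lra) ltac:(rewrite Rabs_left by lra; lra) ltac:(red; lra)).
replace (1 + (y - 1)) with y in Hd' by ring.
replace ((f y - f 1) / (y - 1)) with ((f 1 - f y) / (1 - y)) in Hd' by (field; lra).
apply Rabs_lt_between in Hd'.
replace (f 1 - f y) with ((f 1 - f y) / (1 - y) * (1 - y)) by (field; lra).
split; apply Rmult_le_compat_r; lra.
Qed.

Definition opA_symbol (t : R) : R := (exp (t / 2) - exp (- (t / 2))) / t.

Lemma exp_opp_lt_exp x : 0 < x -> exp (- x) < exp x.
Proof. intros; apply exp_increasing; lra. Qed.

Lemma opA_symbol_pos t : 0 < t -> 0 < opA_symbol t.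
Proof.
intros Ht. apply Rdiv_lt_0_compat; [|lra].
pose proof (exp_opp_lt_exp (t / 2)). lra.
Qed.

Lemma sinh_lt_mul_cosh x : 0 < x -> exp x - exp (- x) < x * (exp x + exp (- x)).
Proof.
intros Hx.
set (psi := fun x => x * (exp x + exp (- x)) - (exp x - exp (- x))).
destruct (MVT_cor2 psi (fun x => x * (exp x - exp (- x))) 0 x Hx) as [c [Hc Hc0x]].
{ intros c _. apply is_derive_Reals. unfold psi. auto_derive; [auto|ring]. }
pose proof (exp_opp_lt_exp c ltac:(lra)).
assert (psi 0 = 0) by (unfold psi; rewrite Ropp_0; ring).
assert (0 < c * (exp c - exp (- c)) * (x - 0)) by (apply Rmult_lt_0_compat; [nra|lra]).
unfold psi in *. lra.
Qed.

Lemma opA_symbol_increasing s t : 0 < s -> s < t -> opA_symbol s < opA_symbol t.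
Proof.
intros Hs Hst.
apply (incr_function opA_symbol 0 p_infty
  (fun t => (t / 2 * (exp (t / 2) + exp (- (t / 2))) - (exp (t / 2) - exp (- (t / 2)))) / t ^ 2));
  simpl; try lra.
- intros u Hu _. unfold opA_symbol. auto_derive; [lra|]. unfold Rdiv. field. lra.
- intros u Hu _. apply Rdiv_lt_0_compat; [|nra].
  pose proof (sinh_lt_mul_cosh (u / 2) ltac:(lra)). lra.
Qed.

Lemma opA_symbol_sq_increasing s t : 0 < s -> s < t -> opA_symbol s ^ 2 < opA_symbol t ^ 2.
Proof.
intros Hs Hst. pose proof (opA_symbol_pos s Hs). pose proof (opA_symbol_increasing s t Hs Hst).
simpl. nra.
Qed.

Lemma opA_symbol_dispersion lam t : 0 < t -> t ^ 2 = 2 * lam * (cosh t - 1) ->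
  lam * opA_symbol t ^ 2 = 1.
Proof.
intros Ht Hdisp.
assert (Hsq : (opA_symbol t * t) ^ 2 = 2 * (cosh t - 1)).
{ unfold opA_symbol, cosh.
  replace ((exp (t / 2) - exp (- (t / 2))) / t * t) with (exp (t / 2) - exp (- (t / 2)))
    by (field; lra).
  replace t with (t / 2 + t / 2) at 3 4 by field.
  replace (- (t / 2 + t / 2)) with (- (t / 2) + - (t / 2)) by ring.
  rewrite !exp_plus.
  assert (exp (t / 2) * exp (- (t / 2)) = 1)
    by (rewrite <- exp_plus, Rplus_opp_r; apply exp_0).
  nra. }
apply Rmult_eq_reg_r with (t ^ 2); [|nra].
replace (lam * opA_symbol t ^ 2 * t ^ 2) with (lam * (opA_symbol t * t) ^ 2) by ring.
rewrite Hsq, Hdisp. ring.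
Qed.

Lemma increasing_ex_RInt f a b : increasing f -> ex_RInt f a b.
Proof.
intros Hf.
assert (H : forall a b, a <= b -> ex_RInt f a b)
  by (intros; apply ex_RInt_nondecreasing; auto).
destruct (Rle_lt_dec a b); [auto|apply ex_RInt_swap, H; lra].
Qed.

Lemma decreasing_ex_RInt f a b : decreasing f -> ex_RInt f a b.
Proof.
intros Hf.
apply ex_RInt_ext with (fun x => opp (opp (f x))); [intros; apply opp_opp|].
apply (ex_RInt_opp (fun x => opp (f x))), increasing_ex_RInt.
intros x y Hxy. specialize (Hf x y Hxy). unfold opp; simpl. lra.
Qed.

Lemma opA_shift f s : ex_RInt f (s - 1/2) (s + 1/2) ->
  opA f s = RInt (fun x => f (x + s)) (-1/2) (1/2).
Proof.
intros H. unfold opA.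
assert (H' : ex_RInt f (1 * (-1/2) + s) (1 * (1/2) + s))
  by (replace (1 * (-1/2) + s) with (s - 1/2) by lra;
      replace (1 * (1/2) + s) with (s + 1/2) by lra; exact H).
transitivity (RInt f (1 * (-1/2) + s) (1 * (1/2) + s)); [f_equal; lra|].
rewrite <- (RInt_comp_lin f 1 s _ _ H').
apply RInt_ext. intros x _. unfold scal; simpl; unfold mult; simpl.
rewrite !Rmult_1_l. reflexivity.
Qed.

Lemma opA_le (f g : R -> R) s :
  ex_RInt f (s - 1/2) (s + 1/2) -> ex_RInt g (s - 1/2) (s + 1/2) ->
  (forall x, s - 1/2 < x < s + 1/2 -> f x <= g x) -> opA f s <= opA g s.
Proof. intros Hf Hg Hfg. apply RInt_le; [lra|exact Hf|exact Hg|exact Hfg]. Qed.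

Lemma opA_decreasing f : decreasing f -> decreasing (opA f).
Proof.
intros Hf s t Hst.
assert (Hsh : forall x, decreasing (fun y => f (y + x))) by (intros x y z ?; apply Hf; lra).
rewrite !opA_shift by (apply decreasing_ex_RInt; auto).
apply RInt_le; [lra|apply decreasing_ex_RInt; auto..|].
intros x _. apply Hf. lra.
Qed.

Lemma opA_const c s : opA (fun _ => c) s = c.
Proof.
unfold opA. rewrite RInt_const. replace (s + 1/2 - (s - 1/2)) with 1 by lra.
apply (scal_one (K := R_Ring)).
Qed.

Lemma opA_scal c f s : ex_RInt f (s - 1/2) (s + 1/2) ->
  opA (fun x => c * f x) s = c * opA f s.
Proof. intros H. apply (RInt_scal f _ _ c H). Qed.

Lemma opA_one_minus f s : ex_RInt f (s - 1/2) (s + 1/2) ->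
  opA (fun x => 1 - f x) s = 1 - opA f s.
Proof.
intros H. unfold opA.
rewrite (RInt_minus (fun _ => 1) f); [|apply ex_RInt_const|auto].
rewrite RInt_const. unfold minus, plus, opp, scal; simpl; unfold mult; simpl. lra.
Qed.

Lemma is_RInt_affine_exp t A B s : t <> 0 ->
  is_RInt (fun x => A * exp (- t * x) + B) (s - 1/2) (s + 1/2)
    (A * opA_symbol t * exp (- t * s) + B).
Proof.
intros Ht.
replace (A * opA_symbol t * exp (- t * s) + B) with
  (minus (- A * exp (- t * (s + 1/2)) / t + B * (s + 1/2))
         (- A * exp (- t * (s - 1/2)) / t + B * (s - 1/2))).
- apply (is_RInt_derive (fun x => - A * exp (- t * x) / t + B * x)).
  + intros x _. auto_derive; [auto|]. field. exact Ht.
  + intros x _. apply (ex_derive_continuous (fun x => A * exp (- t * x) + B)).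
    auto_derive. auto.
- unfold minus, plus, opp; simpl. unfold opA_symbol.
  replace (- t * (s + 1/2)) with (- (t / 2) + - t * s) by field.
  replace (- t * (s - 1/2)) with (t / 2 + - t * s) by field.
  rewrite !exp_plus. field. exact Ht.
Qed.

Lemma opA_affine_exp t A B s : t <> 0 ->
  opA (fun x => A * exp (- t * x) + B) s = A * opA_symbol t * exp (- t * s) + B.
Proof. intros Ht. apply is_RInt_unique, is_RInt_affine_exp, Ht. Qed.

Lemma ex_RInt_affine_exp t A B a b : ex_RInt (fun x => A * exp (- t * x) + B) a b.
Proof.
apply (ex_RInt_continuous (V := R_CompleteNormedModule)). intros x _.
apply (ex_derive_continuous (fun x => A * exp (- t * x) + B)). auto_derive. auto.
Qed.

Lemma opA_ge_quarter f s : decreasing f -> (forall x, 0 <= f x) ->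
  f (s - 1/4) / 4 <= opA f s.
Proof.
intros Hf Hnn. unfold opA.
rewrite <- (RInt_Chasles f (s - 1/2) (s - 1/4) (s + 1/2)) by (apply decreasing_ex_RInt; auto).
assert (H1 : RInt (fun _ => f (s - 1/4)) (s - 1/2) (s - 1/4) <= RInt f (s - 1/2) (s - 1/4)).
{ apply RInt_le; [lra|apply ex_RInt_const|apply decreasing_ex_RInt; auto|].
  intros; apply Hf; lra. }
assert (H2 : RInt (fun _ => 0) (s - 1/4) (s + 1/2) <= RInt f (s - 1/4) (s + 1/2)).
{ apply RInt_le; [lra|apply ex_RInt_const|apply decreasing_ex_RInt; auto|].
  intros; apply Hnn. }
rewrite !RInt_const in H1, H2.
unfold scal in H1, H2; simpl in H1, H2; unfold mult in H1, H2; simpl in H1, H2.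
change (plus ?u ?v) with (u + v). lra.
Qed.

Lemma le_of_le_add_geometric x y B q : 0 <= q < 1 ->
  (forall k : nat, x <= y + B * q ^ k) -> x <= y.
Proof.
intros Hq H. apply Rnot_lt_le. intros Hlt.
destruct (Rle_lt_dec B 0) as [HB|HB]; [specialize (H 0%nat); simpl in H; lra|].
destruct (pow_lt_1_zero q ltac:(rewrite Rabs_right; lra) ((x - y) / B)
  ltac:(apply Rdiv_lt_0_compat; lra)) as [N HN].
specialize (HN N (le_n N)). rewrite Rabs_right in HN by (apply Rle_ge, pow_le; lra).
apply (Rmult_lt_compat_l B) in HN; [|exact HB].
replace (B * ((x - y) / B)) with (x - y) in HN by (field; lra).
specialize (H N). lra.
Qed.

Lemma exp_le_1 x : x <= 0 -> exp x <= 1.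
Proof.
intros Hx. rewrite <- exp_0.
destruct (Rle_lt_or_eq_dec _ _ Hx) as [Hlt| ->]; [left; apply exp_increasing, Hlt|lra].
Qed.

Lemma exp_decay_upper_bound (V : R -> R) B mu t phi0 :
  0 < t -> 0 <= mu < 1 -> mu * opA_symbol t ^ 2 <= 1 -> 0 < B ->
  decreasing V -> (forall x, V x <= B) ->
  (forall phi, phi0 <= phi -> V phi <= mu * opA (opA V) phi) ->
  exists C, 0 < C /\ forall phi, V phi <= C * exp (- t * phi).
Proof.
intros Ht Hmu Hmua HB Hdec HVB HV.
set (a := opA_symbol t).
set (C := B * exp (t * phi0)).
assert (HC : 0 < C) by (apply Rmult_lt_0_compat; [lra|apply exp_pos]).
exists C. split; [exact HC|]. intros phi.
apply (le_of_le_add_geometric _ _ B mu Hmu).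
intros k. revert phi. induction k as [|k IH]; intros phi.
- simpl. pose proof (HVB phi). pose proof (exp_pos (- t * phi)).
  assert (0 < C * exp (- t * phi)) by (apply Rmult_lt_0_compat; lra). lra.
- assert (Hmuk : 0 <= mu ^ k) by (apply pow_le; lra).
  destruct (Rle_lt_dec phi0 phi) as [Hfar|Hnear].
  + (* averaging the bound of rank k twice gains the factor mu a^2 <= 1 *)
    assert (HAV : forall s, opA V s <= C * a * exp (- t * s) + B * mu ^ k).
    { intros s. unfold a. rewrite <- opA_affine_exp by lra.
      apply opA_le; [apply decreasing_ex_RInt, Hdec|apply ex_RInt_affine_exp|].
      intros x _. apply IH. }
    assert (HAAV : opA (opA V) phi <= C * a * a * exp (- t * phi) + B * mu ^ k).
    { replace (C * a * a) with (C * a * opA_symbol t) by reflexivity.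
      rewrite <- opA_affine_exp by lra.
      apply opA_le; [apply decreasing_ex_RInt, opA_decreasing, Hdec
                    |apply ex_RInt_affine_exp|].
      intros s _. apply HAV. }
    specialize (HV phi Hfar). simpl.
    assert (0 < C * exp (- t * phi)) by (apply Rmult_lt_0_compat; [lra|apply exp_pos]).
    assert (mu * (C * a * a * exp (- t * phi)) <= C * exp (- t * phi)).
    { replace (mu * (C * a * a * exp (- t * phi)))
        with (mu * a ^ 2 * (C * exp (- t * phi))) by ring.
      rewrite <- (Rmult_1_l (C * exp (- t * phi))) at 2.
      apply Rmult_le_compat_r; [lra|exact Hmua]. }
    assert (0 <= mu * (B * mu ^ k)) by (apply Rmult_le_pos; [|apply Rmult_le_pos]; lra).
    apply (Rmult_le_compat_l mu) in HAAV; [|lra].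
    replace (B * (mu * mu ^ k)) with (mu * (B * mu ^ k)) by ring. lra.
  + assert (B <= C * exp (- t * phi)).
    { unfold C. rewrite Rmult_assoc, <- exp_plus.
      pose proof (exp_ineq1_le (t * phi0 + - t * phi)).
      assert (0 <= t * phi0 + - t * phi) by nra.
      nra. }
    pose proof (HVB phi). assert (0 <= B * mu ^ S k) by (apply Rmult_le_pos; [lra|apply pow_le; lra]).
    lra.
Qed.

Lemma exp_decay_lower_bound (V : R -> R) nu t phi0 :
  0 < t -> 0 < nu < 1 -> 1 <= nu * opA_symbol t ^ 2 -> 1 <= phi0 ->
  decreasing V -> (forall x, 0 <= V x) -> 0 < V phi0 ->
  (forall phi, phi0 <= phi -> nu * opA (opA V) phi <= V phi) ->
  exists c, 0 < c /\ forall phi, 0 <= phi -> c * exp (- t * phi) <= V phi.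
Proof.
intros Ht Hnu Hnua Hphi0 Hdec HVnn Hc HV.
set (a := opA_symbol t). fold a in Hnua.
set (c := V phi0) in Hc.
assert (Hexp1 : forall phi, 0 <= phi -> exp (- t * phi) <= 1) by (intros; apply exp_le_1; nra).
exists c. split; [exact Hc|]. intros phi Hphi.
apply (le_of_le_add_geometric _ _ c nu ltac:(lra)).
intros k. revert phi Hphi. induction k as [|k IH]; intros phi Hphi.
- simpl. pose proof (Hexp1 phi Hphi). pose proof (HVnn phi). nra.
- assert (Hnuk : 0 <= nu ^ k) by (apply pow_le; lra).
  destruct (Rle_lt_dec phi0 phi) as [Hfar|Hnear].
  + assert (HAV : forall s, phi - 1/2 <= s ->
              c * a * exp (- t * s) + - (c * nu ^ k) <= opA V s).
    { intros s Hs. unfold a. rewrite <- opA_affine_exp by lra.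
      apply opA_le; [apply ex_RInt_affine_exp|apply decreasing_ex_RInt, Hdec|].
      intros x Hx. specialize (IH x ltac:(lra)). lra. }
    assert (HAAV : c * a * a * exp (- t * phi) + - (c * nu ^ k) <= opA (opA V) phi).
    { replace (c * a * a) with (c * a * opA_symbol t) by reflexivity.
      rewrite <- opA_affine_exp by lra.
      apply opA_le; [apply ex_RInt_affine_exp
                    |apply decreasing_ex_RInt, opA_decreasing, Hdec|].
      intros s Hs. apply HAV. lra. }
    specialize (HV phi Hfar). simpl.
    assert (0 < c * exp (- t * phi)) by (apply Rmult_lt_0_compat; [lra|apply exp_pos]).
    assert (c * exp (- t * phi) <= nu * (c * a * a * exp (- t * phi))).
    { replace (nu * (c * a * a * exp (- t * phi)))
        with (nu * a ^ 2 * (c * exp (- t * phi))) by ring.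
      rewrite <- (Rmult_1_l (c * exp (- t * phi))) at 1.
      apply Rmult_le_compat_r; [lra|exact Hnua]. }
    apply (Rmult_le_compat_l nu) in HAAV; [|lra].
    replace (c * (nu * nu ^ k)) with (nu * (c * nu ^ k)) by ring. lra.
  + pose proof (Hdec phi phi0 ltac:(lra)). pose proof (Hexp1 phi Hphi).
    assert (0 <= c * nu ^ S k) by (apply Rmult_le_pos; [lra|apply pow_le; lra]).
    fold c in H. nra.
Qed.

Section FrontProfile.

Variables Phi1 Phi2 W : R -> R.
Hypothesis Phi1_deriv : forall x, I11 x -> has_deriv_on_I11 Phi1 x (Phi2 x).
Hypothesis Phi2_nonneg : forall x, I11 x -> 0 <= Phi2 x.
Hypothesis Phi1_1 : Phi1 1 = 1.
Hypothesis lambda_range : 0 < Phi2 1 < 1.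
Hypothesis W_increasing : increasing W.
Hypothesis W_fixed_point : forall phi, W phi = opA (fun s => Phi1 (opA W s)) phi.
Hypothesis W_lim_p_infty : is_lim W p_infty 1.
Hypothesis W_lim_m_infty : is_lim W m_infty (-1).

Let lam := Phi2 1.
Let V (x : R) : R := 1 - W x.
Let G (s : R) : R := 1 - Phi1 (opA W s).

Lemma W_le_1 x : W x <= 1.
Proof.
apply (is_lim_le_loc (fun _ => W x) W p_infty (W x) 1); [|apply is_lim_const|auto].
exists x. intros y Hy. apply W_increasing. lra.
Qed.

Lemma W_ge_m1 x : -1 <= W x.
Proof.
apply (is_lim_le_loc W (fun _ => W x) m_infty (-1) (W x)); [|auto|apply is_lim_const].
exists x. intros y Hy. apply W_increasing. lra.
Qed.

Lemma V_decreasing : decreasing V.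
Proof. intros x y Hxy. unfold V. pose proof (W_increasing x y Hxy). lra. Qed.

Lemma V_bounds x : 0 <= V x <= 2.
Proof. unfold V. pose proof (W_le_1 x). pose proof (W_ge_m1 x). lra. Qed.

Lemma opA_V s : opA V s = 1 - opA W s.
Proof. apply opA_one_minus, increasing_ex_RInt, W_increasing. Qed.

Lemma opA_V_bounds s : 0 <= opA V s <= 2.
Proof.
assert (Hint : ex_RInt V (s - 1/2) (s + 1/2)) by apply decreasing_ex_RInt, V_decreasing.
rewrite <- (opA_const 0 s), <- (opA_const 2 s).
split; apply opA_le; [apply ex_RInt_const|exact Hint| |exact Hint|apply ex_RInt_const|];
  intros x _; apply V_bounds.
Qed.

Lemma Phi1_nondecreasing x y : -1 <= x -> x <= y -> y <= 1 -> Phi1 x <= Phi1 y.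
Proof. apply (nondecreasing_on_I11 Phi1 Phi2); auto. Qed.

Lemma Phi1_lt_1 y : -1 <= y < 1 -> Phi1 y < 1.
Proof.
intros Hy.
destruct (has_deriv_on_I11_left_of_1 Phi1 lam (Phi1_deriv 1 ltac:(red; lra)) (lam / 2))
  as [d [Hd Hnear]]; [unfold lam; lra|].
set (z := Rmax y (1 - d / 2)).
assert (Hz : y <= z /\ 1 - d / 2 <= z /\ z < 1)
  by (unfold z; split; [apply Rmax_l|split; [apply Rmax_r|apply Rmax_lub_lt; lra]]).
pose proof (Phi1_nondecreasing y z ltac:(lra) ltac:(lra) ltac:(lra)).
destruct (Hnear z ltac:(lra)) as [Hz1 _].
assert (0 < (lam - lam / 2) * (1 - z)) by (apply Rmult_lt_0_compat; unfold lam in *; lra).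
lra.
Qed.

Lemma G_opA_V s : G s = 1 - Phi1 (1 - opA V s).
Proof. unfold G. rewrite opA_V. f_equal. f_equal. ring. Qed.

Lemma G_decreasing : decreasing G.
Proof.
intros s t Hst. rewrite !G_opA_V.
pose proof (opA_V_bounds s). pose proof (opA_V_bounds t).
pose proof (opA_decreasing V V_decreasing s t Hst).
pose proof (Phi1_nondecreasing (1 - opA V s) (1 - opA V t)). lra.
Qed.

Lemma G_nonneg s : 0 <= G s.
Proof.
rewrite G_opA_V. pose proof (opA_V_bounds s).
destruct (Req_dec (opA V s) 0) as [->|Hne].
- rewrite Rminus_0_r, Phi1_1. lra.
- pose proof (Phi1_lt_1 (1 - opA V s)). lra.
Qed.

Lemma G_eq_0 s : G s = 0 -> opA V s = 0.
Proof.
rewrite G_opA_V. intros HG. pose proof (opA_V_bounds s).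
destruct (Req_dec (opA V s) 0) as [|Hne]; [auto|].
pose proof (Phi1_lt_1 (1 - opA V s)). lra.
Qed.

Lemma V_opA_G phi : V phi = opA G phi.
Proof.
assert (Hint : ex_RInt (fun s => Phi1 (opA W s)) (phi - 1/2) (phi + 1/2)).
{ apply increasing_ex_RInt. intros s t Hst.
  pose proof (G_decreasing s t Hst). unfold G in *. lra. }
unfold V, G. rewrite W_fixed_point, opA_one_minus by exact Hint. reflexivity.
Qed.

Lemma V_pos x : 0 < V x.
Proof.
destruct (proj1 (V_bounds x)) as [|Hx0]; [auto|exfalso].
(* V y = 0 forces G = 0 on [y - 1/2, y], hence A V (y - 1/4) = 0 *)
assert (Hstep : forall y, V y = 0 -> V (y - 1/2) = 0).
{ intros y Hy.
  pose proof (opA_ge_quarter G y G_decreasing G_nonneg).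
  rewrite <- V_opA_G, Hy in H. pose proof (G_nonneg (y - 1/4)).
  pose proof (G_eq_0 (y - 1/4) ltac:(lra)).
  pose proof (opA_ge_quarter V (y - 1/4) V_decreasing (fun x => proj1 (V_bounds x))).
  replace (y - 1/4 - 1/4) with (y - 1/2) in H2 by field.
  pose proof (V_bounds (y - 1/2)). lra. }
assert (Hn : forall n, V (x - INR n / 2) = 0).
{ induction n as [|n IH].
  - simpl. replace (x - 0 / 2) with x by field. auto.
  - rewrite S_INR. replace (x - (INR n + 1) / 2) with (x - INR n / 2 - 1/2) by field.
    auto. }
assert (HW1 : forall y, W y = 1).
{ intros y. destruct (INR_unbounded (2 * (x - y))) as [n Hn'].
  pose proof (V_decreasing (x - INR n / 2) y ltac:(lra)).
  pose proof (Hn n). pose proof (V_bounds y). unfold V in *. lra. }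
assert (Rbar_le 1 (-1)); [|simpl in *; lra].
apply (is_lim_le_loc (fun _ => 1) W m_infty); [|apply is_lim_const|auto].
exists 0. intros y _. rewrite HW1. lra.
Qed.

Lemma opA_V_eventually_small d : 0 < d -> exists s0, forall s, s0 <= s -> opA V s <= d.
Proof.
intros Hd.
destruct (W_lim_p_infty (fun y => Rabs (y - 1) < d)) as [M HM]; [now exists (mkposreal d Hd)|].
exists (M + 1). intros s Hs.
rewrite <- (opA_const d s).
apply opA_le; [apply decreasing_ex_RInt, V_decreasing|apply ex_RInt_const|].
intros x Hx. specialize (HM x ltac:(lra)). apply Rabs_lt_between in HM. unfold V. lra.
Qed.

Lemma G_asymptotically_linear e : 0 < e -> exists s0, forall s, s0 <= s ->
  (lam - e) * opA V s <= G s <= (lam + e) * opA V s.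
Proof.
intros He.
destruct (has_deriv_on_I11_left_of_1 Phi1 lam (Phi1_deriv 1 ltac:(red; lra)) e He)
  as [d [Hd Hnear]].
destruct (opA_V_eventually_small (d / 2) ltac:(lra)) as [s0 Hs0].
exists s0. intros s Hs. rewrite G_opA_V.
pose proof (opA_V_bounds s). pose proof (Hs0 s Hs).
specialize (Hnear (1 - opA V s) ltac:(lra)).
rewrite Phi1_1 in Hnear. replace (1 - (1 - opA V s)) with (opA V s) in Hnear by ring.
exact Hnear.
Qed.

Lemma V_asymptotically_linear e : 0 < e -> exists phi0, forall phi, phi0 <= phi ->
  (lam - e) * opA (opA V) phi <= V phi <= (lam + e) * opA (opA V) phi.
Proof.
intros He. destruct (G_asymptotically_linear e He) as [s0 Hs0].
exists (s0 + 1/2). intros phi Hphi.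
assert (HAV : ex_RInt (opA V) (phi - 1/2) (phi + 1/2))
  by apply decreasing_ex_RInt, opA_decreasing, V_decreasing.
assert (HG : ex_RInt G (phi - 1/2) (phi + 1/2)) by apply decreasing_ex_RInt, G_decreasing.
rewrite V_opA_G, <- (opA_scal (lam - e)), <- (opA_scal (lam + e)) by exact HAV.
split; apply opA_le.
- apply (ex_RInt_scal (opA V)), HAV.
- exact HG.
- intros s Hs. apply Hs0. lra.
- exact HG.
- apply (ex_RInt_scal (opA V)), HAV.
- intros s Hs. apply Hs0. lra.
Qed.

Lemma V_exp_upper_bound t : 0 < t -> lam * opA_symbol t ^ 2 < 1 ->
  exists C, 0 < C /\ forall phi, V phi <= C * exp (- t * phi).
Proof.
intros Ht Hdisp.
set (a2 := opA_symbol t ^ 2) in Hdisp.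
assert (Ha2 : 0 < a2) by (apply pow_lt, opA_symbol_pos, Ht).
(* any mu strictly between lam and min(1, 1/a^2) will do *)
set (m := Rmin 1 (/ a2)).
assert (Hm : lam < m /\ m <= 1 /\ m * a2 <= 1).
{ unfold m. split; [|split; [apply Rmin_l|]].
  - apply Rmin_glb_lt; [unfold lam; lra|].
    apply (Rmult_lt_reg_r a2); [lra|]. rewrite Rinv_l; lra.
  - rewrite <- (Rinv_l a2) by lra. apply Rmult_le_compat_r; [lra|apply Rmin_r]. }
set (mu := (lam + m) / 2).
destruct (V_asymptotically_linear (mu - lam) ltac:(unfold mu; lra)) as [phi0 Hphi0].
apply (exp_decay_upper_bound V 2 mu t phi0); auto.
- unfold mu, lam in *. lra.
- fold a2. unfold mu. nra.
- lra.
- exact V_decreasing.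
- apply V_bounds.
- intros phi Hphi. replace mu with (lam + (mu - lam)) by ring. apply Hphi0, Hphi.
Qed.

Lemma V_exp_lower_bound t : 0 < t -> 1 < lam * opA_symbol t ^ 2 ->
  exists c, 0 < c /\ forall phi, 0 <= phi -> c * exp (- t * phi) <= V phi.
Proof.
intros Ht Hdisp.
set (a2 := opA_symbol t ^ 2) in Hdisp.
assert (Ha2 : 0 < a2) by (apply pow_lt, opA_symbol_pos, Ht).
assert (Hinv : 0 < / a2 < lam).
{ split; [apply Rinv_0_lt_compat, Ha2|].
  apply (Rmult_lt_reg_r a2); [lra|]. rewrite Rinv_l; lra. }
set (nu := (lam + / a2) / 2).
destruct (V_asymptotically_linear (lam - nu) ltac:(unfold nu; lra)) as [phi0 Hphi0].
apply (exp_decay_lower_bound V nu t (Rmax phi0 1)); auto.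
- unfold nu, lam in *. lra.
- fold a2. unfold nu. assert (/ a2 * a2 = 1) by (field; lra). nra.
- apply Rmax_r.
- exact V_decreasing.
- apply V_bounds.
- apply V_pos.
- intros phi Hphi. replace nu with (lam - (lam - nu)) by ring.
  apply Hphi0. pose proof (Rmax_l phi0 1). lra.
Qed.

End FrontProfile.

Theorem lemma4p1
  (Phi Phi1 Phi2 : R -> R)
  (HPhi1 : forall x, I11 x -> has_deriv_on_I11 Phi x (Phi1 x))
  (HPhi2 : forall x, I11 x -> has_deriv_on_I11 Phi1 x (Phi2 x))
  (HPhi2c : forall x, I11 x -> cont_on_I11 Phi2 x)
  (Hm1 : Phi1 (-1) = -1) (Hp1 : Phi1 1 = 1)
  (Hconv : forall x, I11 x -> 0 <= Phi2 x)
  (Hsym : Phi (-1) = Phi 1)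
  (Hlm : Phi2 (-1) < 1)
  (Hlp : 0 < Phi2 1 < 1)
  (tau_p : R) (Htau_pos : 0 < tau_p)
  (Htau_eq : tau_p ^ 2 = 2 * Phi2 1 * (cosh tau_p - 1))
  (W : R -> R)
  (Wbdd : exists M, forall x, Rabs (W x) <= M)
  (Wmono : forall x y, x <= y -> W x <= W y)
  (Weq : forall phi, W phi = opA (fun s => Phi1 (opA W s)) phi)
  (Wlimp : is_lim W p_infty 1)
  (Wlimm : is_lim W m_infty (-1)) :
  forall tau_lo tau_hi, tau_lo < tau_p < tau_hi ->
  exists c_lo c_hi, 0 < c_lo /\ 0 < c_hi /\
    forall phi, 0 <= phi ->
      c_lo * exp (- tau_hi * phi) <= Wsh phi - W phi /\
      Wsh phi - W phi <= c_hi * exp (- tau_lo * phi).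
Proof.
intros tau_lo tau_hi Htau.
assert (Hdisp : Phi2 1 * opA_symbol tau_p ^ 2 = 1) by (apply opA_symbol_dispersion; auto).
assert (Hmono : forall s t, 0 < s -> s < t -> Phi2 1 * opA_symbol s ^ 2 < Phi2 1 * opA_symbol t ^ 2)
  by (intros; apply Rmult_lt_compat_l; [lra|apply opA_symbol_sq_increasing; auto]).
destruct (V_exp_lower_bound Phi1 Phi2 W) with tau_hi as [c_lo [Hc_lo Hlo]]; auto;
  [lra|pose proof (Hmono tau_p tau_hi); lra|].
assert (Hhi : exists c_hi, 0 < c_hi /\
          forall phi, 0 <= phi -> 1 - W phi <= c_hi * exp (- tau_lo * phi)).
{ destruct (Rle_lt_dec tau_lo 0) as [Hneg|Hpos].
  - exists 2. split; [lra|]. intros phi Hphi.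
    pose proof (exp_ineq1_le (- tau_lo * phi)).
    assert (0 <= - tau_lo * phi) by nra.
    pose proof (V_bounds W Wmono Wlimp Wlimm phi). lra.
  - destruct (V_exp_upper_bound Phi1 Phi2 W) with tau_lo as [c_hi [Hc_hi Hup]]; auto;
      [pose proof (Hmono tau_lo tau_p); lra|].
    exists c_hi. split; [exact Hc_hi|]. intros phi _. apply Hup. }
destruct Hhi as [c_hi [Hc_hi Hup]].
exists c_lo, c_hi. split; [exact Hc_lo|]. split; [exact Hc_hi|].
intros phi Hphi.
replace (Wsh phi) with 1 by (unfold Wsh; destruct (Rlt_dec phi 0); lra).
split; [apply Hlo|apply Hup]; exact Hphi.
Qed.
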